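(* Let $M=B\circ S$, $x,x'\in\mathbb X$, and let $A_1,\dots,A_I$ and $E_1,\dots,E_J$ be partitions of $\mathbb Y$ with $\Pr[S(x)\in A_i]>0$, $\Pr[S(x')\in E_j]>0$ for all $i,j$. Write $s_1,\dots,s_{I+J}$ for the conditional pmfs $s_x(\cdot\mid A_1),\dots,s_x(\cdot\mid A_I),s_{x'}(\cdot\mid E_1),\dots,s_{x'}(\cdot\mid E_J)$ and let $\mathbb G$ be the set of all couplings between them. If $\gamma^*\in\mathbb G$ is $d_{\mathbb Y}$-compatible, then for every $\alpha$ (with $\alpha>1$), $$\gamma^*\in\arg\min_{\gamma\in\mathbb G}\sum_{(\mathbf y^{(1)},\mathbf y^{(2)})\in\mathbb Y^{I+J}}\hat c_\alpha(\mathbf y^{(1)},\mathbf y^{(2)})\,\gamma(\mathbf y^{(1)},\mathbf y^{(2)}),$$ where $\hat c_\alpha$ is the cost upper bound defined in the context.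
   Context: Setting: finite $\mathbb A$, $\mathbb X\subseteq\mathcal P(\mathbb A)$, finite batch space $\mathbb Y$ with a symmetric neighboring relation $\simeq_{\mathbb Y}$ and induced distance $d_{\mathbb Y}$ (length of the shortest chain of neighbors; $0$ from $y$ to itself). $S$ assigns to each dataset $x$ a pmf $s_x$ on $\mathbb Y$, $B$ assigns to each batch $y$ a density $b_y$ on $\mathbb R^D$, $m_x=\sum_y b_y s_x(y)$. $H_\alpha(p\|q)=\int\max\{p-\alpha q,0\}$, $\Lambda_\alpha(p\|q)=\int p^\alpha q^{1-\alpha}$; $\Psi_\alpha$ is either. Cost: $c_\alpha(\mathbf y^{(1)},\mathbf y^{(2)})=\Psi_\alpha(\sum_i b_{y^{(1)}_i}\Pr[S(x)\in A_i]\|\sum_j b_{y^{(2)}_j}\Pr[S(x')\in E_j])$ and $\hat c_\alpha(\mathbf y^{(1)},\mathbf y^{(2)})$ is the maximum of $c_\alpha(\hat{\mathbf y}^{(1)},\hat{\mathbf y}^{(2)})$ over $\hat{\mathbf y}^{(1)}\in\mathbb Y^I,\hat{\mathbf y}^{(2)}\in\mathbb Y^J$ with $d_{\mathbb Y}(\hat y^{(k)}_t,\hat y^{(l)}_u)\le d_{\mathbb Y}(y^{(k)}_t,y^{(l)}_u)$ for all $k,l,t,u$. For a pmf $p$, $\mathrm{supp}(p)=\{y:p(y)>0\}$; $d_{\mathbb Y}(y,\mathrm{supp}(p))=\min_{y'\in\mathrm{supp}(p)}d_{\mathbb Y}(y,y')$ and $d_{\mathbb Y}(\mathrm{supp}(p_1),\mathrm{supp}(p_2))=\min_{y_1\in\mathrm{supp}(p_1),y_2\in\mathrm{supp}(p_2)}d_{\mathbb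 Y}(y_1,y_2)$. A coupling $\gamma$ of pmfs $p_1,\dots,p_N$ (indexing the tuple as $\mathbf y=(y_1,\dots,y_N)$) is $d_{\mathbb Y}$-compatible if $\gamma(\mathbf y)>0$ implies both $d_{\mathbb Y}(y_1,y_u)=d_{\mathbb Y}(y_1,\mathrm{supp}(p_u))$ for all $u>1$ and $d_{\mathbb Y}(y_t,y_u)=d_{\mathbb Y}(\mathrm{supp}(p_t),\mathrm{supp}(p_u))$ for all $u>t>1$. *)

From HB Require Import structures.
From mathcomp Require Import all_boot all_order all_algebra.
From mathcomp Require Import all_classical all_reals all_analysis.
Set Implicit Arguments. Unset Strict Implicit. Unset Printing Implicit Defensive.
Import Order.TTheory GRing.Theory Num.Theory.
Local Open Scope ring_scope.

(* shortest chain, if any, has length < #|Y|, so the value #|Y| encodes *)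
(* "infinite distance" (no chain): it is larger than every finite       *)
(* distance and all infinite distances are equal.                       *)
Fixpoint walk (Y : finType) (nb : rel Y) (k : nat) (y y' : Y) : bool :=
  if k is k'.+1 then [exists z, nb y z && walk nb k' z y'] else y == y'.

Definition distY (Y : finType) (nb : rel Y) (y y' : Y) : nat :=
  \big[minn/#|Y|]_(k < #|Y| | walk nb k y y') (k : nat).

Definition is_pmf (R : realType) (Y : finType) (p : {ffun Y -> R}) : Prop :=
  (forall y, 0 <= p y) /\ \sum_(y : Y) p y = 1.

Definition supp (R : realType) (Y : finType) (p : {ffun Y -> R}) : {set Y} :=
  [set y | 0 < p y].

(* d_Y(y, supp p) and d_Y(supp p1, supp p2) (minima; #|Y| = infinity) *)
Definition dist_pt_supp (R : realType) (Y : finType) (nb : rel Y) (y : Y)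
  (p : {ffun Y -> R}) : nat :=
  \big[minn/#|Y|]_(y' in supp p) distY nb y y'.

Definition dist_supp (R : realType) (Y : finType) (nb : rel Y)
  (p1 p2 : {ffun Y -> R}) : nat :=
  \big[minn/#|Y|]_(y1 in supp p1) \big[minn/#|Y|]_(y2 in supp p2) distY nb y1 y2.

Definition is_coupling (R : realType) (Y : finType) (N : nat)
  (p : 'I_N -> {ffun Y -> R}) (g : {ffun {ffun 'I_N -> Y} -> R}) : Prop :=
  (forall t, 0 <= g t) /\
  (forall (k : 'I_N) (y : Y), \sum_(t : {ffun 'I_N -> Y} | t k == y) g t = p k y).

(* d_Y-compatibility; index 0 plays the role of the paper's index 1 *)
Definition dY_compatible (R : realType) (Y : finType) (nb : rel Y) (N : nat)
  (p : 'I_N -> {ffun Y -> R}) (g : {ffun {ffun 'I_N -> Y} -> R}) : Prop :=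
  forall t : {ffun 'I_N -> Y}, 0 < g t ->
    (forall a u : 'I_N, (a : nat) = 0%N -> (0 < u)%N ->
        distY nb (t a) (t u) = dist_pt_supp nb (t a) (p u)) /\
    (forall a u : 'I_N, (0 < a)%N -> (a < u)%N ->
        distY nb (t a) (t u) = dist_supp nb (p a) (p u)).

Definition prob (R : realType) (Y : finType) (p : {ffun Y -> R}) (A : {set Y}) : R :=
  \sum_(y in A) p y.

Definition cond_pmf (R : realType) (Y : finType) (p : {ffun Y -> R}) (A : {set Y})
  : {ffun Y -> R} :=
  [ffun y => if y \in A then p y / prob p A else 0].

Definition is_partition_fam (Y : finType) (n : nat) (A : 'I_n -> {set Y}) : Prop :=
  (forall y, exists i, y \in A i) /\
  (forall i j, i != j -> [disjoint A i & A j]).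

Definition is_density (R : realType) (d : measure_display) (T : measurableType d)
  (mu : {measure set T -> \bar R}) (f : T -> R) : Prop :=
  (forall z, 0 <= f z) /\ measurable_fun setT f /\
  (\int[mu]_z (f z)%:E = 1)%E.

Definition hockey (R : realType) (d : measure_display) (T : measurableType d)
  (mu : {measure set T -> \bar R}) (alpha : R) (p q : T -> R) : \bar R :=
  (\int[mu]_z (Num.max (p z - alpha * q z) 0)%:E)%E.

(* integrand p^alpha q^(1-alpha), with the usual conventions for alpha > 1:
   0 where p = 0, +oo where p > 0 = q *)
Definition renyi_integrand (R : realType) (alpha : R) (pz qz : R) : \bar R :=
  if qz == 0 then (if pz == 0 then 0%E else +oo%E)
  else ((pz `^ alpha) * (qz `^ (1 - alpha)))%:E.

Definition renyi_lambda (R : realType) (d : measure_display) (T : measurableType d)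
  (mu : {measure set T -> \bar R}) (alpha : R) (p q : T -> R) : \bar R :=
  (\int[mu]_z renyi_integrand alpha (p z) (q z))%E.

Inductive divergence_kind := HockeyStick | RenyiLambda.

Definition Psi (R : realType) (d : measure_display) (T : measurableType d)
  (mu : {measure set T -> \bar R}) (k : divergence_kind) (alpha : R)
  (p q : T -> R) : \bar R :=
  match k with
  | HockeyStick => hockey mu alpha p q
  | RenyiLambda => renyi_lambda mu alpha p q
  end.

Definition cost (R : realType) (d : measure_display) (T : measurableType d)
  (mu : {measure set T -> \bar R}) (k : divergence_kind) (alpha : R)
  (Y : finType) (B : Y -> T -> R) (sx sx' : {ffun Y -> R}) (I J : nat)
  (A : 'I_I -> {set Y}) (E : 'I_J -> {set Y})
  (y1 : {ffun 'I_I -> Y}) (y2 : {ffun 'I_J -> Y}) : \bar R :=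
  Psi mu k alpha
    (fun z => \sum_(i < I) B (y1 i) z * prob sx (A i))
    (fun z => \sum_(j < J) B (y2 j) z * prob sx' (E j)).

Definition part1 (Y : finType) (I J : nat) (t : {ffun 'I_(I + J) -> Y})
  : {ffun 'I_I -> Y} := [ffun i => t (lshift J i)].
Definition part2 (Y : finType) (I J : nat) (t : {ffun 'I_(I + J) -> Y})
  : {ffun 'I_J -> Y} := [ffun j => t (rshift I j)].

Definition cost_hat (R : realType) (d : measure_display) (T : measurableType d)
  (mu : {measure set T -> \bar R}) (k : divergence_kind) (alpha : R)
  (Y : finType) (nb : rel Y) (B : Y -> T -> R) (sx sx' : {ffun Y -> R}) (I J : nat)
  (A : 'I_I -> {set Y}) (E : 'I_J -> {set Y}) (t : {ffun 'I_(I + J) -> Y})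
  : \bar R :=
  \big[Order.max/-oo%E]_(th : {ffun 'I_(I + J) -> Y} |
        [forall a, forall b, (distY nb (th a) (th b) <= distY nb (t a) (t b))%N])
     cost mu k alpha B sx sx' A E (part1 th) (part2 th).

Definition cond_family (R : realType) (Y : finType) (sx sx' : {ffun Y -> R})
  (I J : nat) (A : 'I_I -> {set Y}) (E : 'I_J -> {set Y}) (k : 'I_(I + J))
  : {ffun Y -> R} :=
  match fintype.split k with
  | inl i => cond_pmf sx (A i)
  | inr j => cond_pmf sx' (E j)
  end.

Definition expected_cost (R : realType) (d : measure_display) (T : measurableType d)
  (mu : {measure set T -> \bar R}) (k : divergence_kind) (alpha : R)
  (Y : finType) (nb : rel Y) (B : Y -> T -> R) (sx sx' : {ffun Y -> R}) (I J : nat)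
  (A : 'I_I -> {set Y}) (E : 'I_J -> {set Y}) (g : {ffun {ffun 'I_(I + J) -> Y} -> R})
  : \bar R :=
  (\sum_(t : {ffun 'I_(I + J) -> Y})
      cost_hat mu k alpha nb B sx sx' A E t * (g t)%:E)%E.

From HB Require Import structures.
From mathcomp Require Import all_boot all_order all_algebra.
From mathcomp Require Import all_classical all_reals all_analysis.
Import Order.TTheory GRing.Theory Num.Theory.
Local Open Scope ring_scope.

Set Implicit Arguments. Unset Strict Implicit.

(* [cost_hat] is monotone in the matrix of pairwise distances of its
   argument.  On the support of any coupling, [t u] lies in the support of
   the u-th marginal, so every distance of [t] is at least the
   corresponding (point-to-support or support-to-support) distance, and a
   compatible coupling [gs] attains all of these lower bounds simultaneously once
   the first coordinate is fixed.  So on the support of [gs] the cost is a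
   function of the first coordinate alone, and this function bounds the
   cost from below on the support of every coupling; both expectations
   then reduce to sums against the common first marginal. *)

Lemma walk_succ (Y : finType) (nb : rel Y) k y y' :
  walk nb k.+1 y y' = [exists z, nb y z && walk nb k z y'].
Proof. by []. Qed.

Lemma walkS (Y : finType) (nb : rel Y) k y y' :
  walk nb k.+1 y y' = [exists z, walk nb k y z && nb z y'].
Proof.
elim: k y => [|k IH] y.
  apply/existsP/existsP => [[z /andP[nb_yz /eqP <-]]|[z /andP[/eqP <- nb_yz]]].
    by exists y; rewrite /= eqxx nb_yz.
  by exists y'; rewrite nb_yz eqxx.
rewrite {1}walk_succ; apply/existsP/existsP.
  move=> [z /andP[nb_yz]]; rewrite IH => /existsP[w /andP[walk_zw nb_wy']].
  by exists w; rewrite nb_wy' andbT walk_succ; apply/existsP; exists z; rewrite nb_yz.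
move=> [w /andP[]]; rewrite walk_succ => /existsP[z /andP[nb_yz walk_zw]] nb_wy'.
by exists z; rewrite nb_yz IH; apply/existsP; exists w; rewrite walk_zw.
Qed.

Lemma walk_sym (Y : finType) (nb : rel Y) : symmetric nb ->
  forall k y y', walk nb k y y' = walk nb k y' y.
Proof.
move=> nb_sym; elim=> [|k IH] y y'; first by rewrite /= eq_sym.
rewrite walk_succ walkS.
by apply/existsP/existsP => -[z /andP[h1 h2]]; exists z; rewrite IH nb_sym h1 h2.
Qed.

Lemma distY_sym (Y : finType) (nb : rel Y) : symmetric nb ->
  forall y y', distY nb y y' = distY nb y' y.
Proof. by move=> nb_sym y y'; apply: eq_bigl => k; rewrite walk_sym. Qed.

Lemma geq_bigminn_cond (I : finType) (P : pred I) c (F : I -> nat) j :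
  P j -> (\big[minn/c]_(i | P i) F i <= F j)%N.
Proof. by move=> Pj; rewrite -minEnat -leEnat bigmin_le_cond. Qed.

Lemma distY_refl (Y : finType) (nb : rel Y) y : distY nb y y = 0%N.
Proof.
have Y_gt0 : (0 < #|Y|)%N by apply/card_gt0P; exists y.
apply/eqP; rewrite -leqn0.
exact: (@geq_bigminn_cond _ _ _ (fun k : 'I_#|Y| => val k) (Ordinal Y_gt0) (eqxx y)).
Qed.

Lemma coupling_supp (R : realType) (Y : finType) (N : nat)
    (p : 'I_N -> {ffun Y -> R}) (g : {ffun {ffun 'I_N -> Y} -> R}) t u :
  is_coupling p g -> 0 < g t -> t u \in supp (p u).
Proof.
move=> [g_ge0 g_marg] gt_gt0; rewrite inE -g_marg (bigD1 t) //=.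
by apply: (lt_le_trans gt_gt0); rewrite lerDl sumr_ge0.
Qed.

Lemma coupling_supp_lift (R : realType) (Y : finType) (N : nat)
    (p : 'I_N -> {ffun Y -> R}) (g : {ffun {ffun 'I_N -> Y} -> R}) u y :
  is_coupling p g -> y \in supp (p u) -> exists2 t, 0 < g t & t u = y.
Proof.
move=> [g_ge0 g_marg]; rewrite inE -g_marg => sum_gt0.
have [/existsP[t /andP[gt_gt0 /eqP tu]]|/existsPn none] :=
  boolP [exists t, (0 < g t) && (t u == y)]; first by exists t.
suff sum0 : \sum_(t : {ffun 'I_N -> Y} | t u == y) g t = 0.
  by rewrite sum0 ltxx in sum_gt0.
apply: big1 => t tu; apply/eqP; rewrite eq_le g_ge0 andbT.
by move: (none t); rewrite tu andbT -leNgt.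
Qed.

Definition dist_dominated (Y : finType) (nb : rel Y) (N : nat)
    (t t' : {ffun 'I_N -> Y}) : Prop :=
  forall a b, (distY nb (t a) (t b) <= distY nb (t' a) (t' b))%N.

Lemma cost_hat_mono (R : realType) (d : measure_display) (T : measurableType d)
    (mu : {measure set T -> \bar R}) (k : divergence_kind) (alpha : R)
    (Y : finType) (nb : rel Y) (B : Y -> T -> R) (sx sx' : {ffun Y -> R})
    (I J : nat) (A : 'I_I -> {set Y}) (E : 'I_J -> {set Y})
    (t t' : {ffun 'I_(I + J) -> Y}) :
  dist_dominated nb t t' ->
  (cost_hat mu k alpha nb B sx sx' A E t <= cost_hat mu k alpha nb B sx sx' A E t')%E.
Proof.
move=> tt'; apply: bigmax_le => [|th /forallP th_t]; first exact: leNye.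
apply: (@le_bigmax_cond _ _ _ -oo%E th); apply/forallP => a; apply/forallP => b.
exact: leq_trans (forallP (th_t a) b) (tt' a b).
Qed.

Section CompatibleCoupling.
Variables (R : realType) (Y : finType) (nb : rel Y) (N : nat).
Hypothesis nb_sym : symmetric nb.
Variables (p : 'I_N -> {ffun Y -> R}) (gs : {ffun {ffun 'I_N -> Y} -> R}).
Hypotheses (gs_coupling : is_coupling p gs) (gs_compat : dY_compatible nb p gs).
Variables (o : 'I_N) (c : {ffun 'I_N -> Y} -> \bar R).
Hypothesis o0 : val o = 0%N.
Hypothesis c_mono : forall t t', dist_dominated nb t t' -> (c t <= c t')%E.

Lemma compatible_dist_dominated g t ts :
  is_coupling p g -> 0 < g t -> 0 < gs ts -> ts o = t o -> dist_dominated nb ts t.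
Proof.
move=> g_coupling gt_gt0 gts_gt0 ts_o.
have [dist_first dist_rest] := gs_compat gts_gt0.
suff lt_case (a b : 'I_N) :
    (a < b)%N -> (distY nb (ts a) (ts b) <= distY nb (t a) (t b))%N.
  move=> a b; case: (ltngtP a b) => [/lt_case//|ba|/val_inj ->].
  - by rewrite distY_sym // [X in (_ <= X)%N]distY_sym // lt_case.
  - by rewrite !distY_refl.
move=> ab; have [a0|] := eqVneq (val a) 0%N.
  have -> : a = o by apply: val_inj; rewrite a0 o0.
  rewrite dist_first ?o0 ?(leq_ltn_trans (leq0n a) ab) // ts_o.
  exact/geq_bigminn_cond/(coupling_supp _ g_coupling).
rewrite -lt0n => a_gt0; rewrite dist_rest //.
apply: leq_trans (geq_bigminn_cond _ _ (coupling_supp a g_coupling gt_gt0)) _.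
exact/geq_bigminn_cond/(coupling_supp _ g_coupling).
Qed.

(* Off the support of the first marginal the value is irrelevant. *)
Definition first_coord_cost (y : Y) : \bar R :=
  if [pick t | (0 < gs t) && (t o == y)] is Some t then c t else 0%E.

Lemma first_coord_cost_le g t :
  is_coupling p g -> 0 < g t -> (first_coord_cost (t o) <= c t)%E.
Proof.
move=> g_coupling gt_gt0; rewrite /first_coord_cost; case: pickP.
  move=> ts /andP[gts_gt0 /eqP ts_o].
  exact/c_mono/(compatible_dist_dominated g_coupling gt_gt0).
have [ts gts_gt0 ts_o] :=
  coupling_supp_lift gs_coupling (coupling_supp o g_coupling gt_gt0).
by move=> /(_ ts); rewrite gts_gt0 ts_o eqxx.
Qed.

Lemma first_coord_cost_supp t : 0 < gs t -> first_coord_cost (t o) = c t.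
Proof.
move=> gt_gt0; apply/eqP; rewrite eq_le (first_coord_cost_le gs_coupling gt_gt0) /=.
rewrite /first_coord_cost; case: pickP; last by move=> /(_ t); rewrite gt_gt0 eqxx.
move=> ts /andP[gts_gt0 /eqP ts_o].
exact/c_mono/(compatible_dist_dominated gs_coupling).
Qed.

Lemma expectation_first_coord (h : Y -> \bar R) g : is_coupling p g ->
  (\sum_(t : {ffun 'I_N -> Y}) h (t o) * (g t)%:E = \sum_y h y * (p o y)%:E)%E.
Proof.
move=> [g_ge0 g_marg].
rewrite (partition_big (fun t : {ffun 'I_N -> Y} => t o) xpredT) //=.
apply: eq_bigr => y _; rewrite -g_marg -sumEFin ge0_sume_distrr.
  by apply: eq_big => [t|t /eqP ->].
by move=> t _; rewrite lee_fin.
Qed.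

Lemma compatible_coupling_optimal g : is_coupling p g ->
  (\sum_(t : {ffun 'I_N -> Y}) c t * (gs t)%:E
     <= \sum_(t : {ffun 'I_N -> Y}) c t * (g t)%:E)%E.
Proof.
move=> g_coupling.
have -> : (\sum_(t : {ffun 'I_N -> Y}) c t * (gs t)%:E
           = \sum_(t : {ffun 'I_N -> Y}) first_coord_cost (t o) * (gs t)%:E)%E.
  apply: eq_bigr => t _; have := gs_coupling.1 t.
  rewrite le_eqVlt => /predU1P[<-|gt_gt0]; first by rewrite !mule0.
  by rewrite first_coord_cost_supp.
rewrite (expectation_first_coord _ gs_coupling).
rewrite -(expectation_first_coord _ g_coupling); apply: lee_sum => t _.
have := g_coupling.1 t; rewrite le_eqVlt => /predU1P[<-|gt_gt0].
  by rewrite !mule0.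
by rewrite lee_wpmul2r ?lee_fin ?(ltW gt_gt0) ?(first_coord_cost_le g_coupling).
Qed.

End CompatibleCoupling.

Lemma pmf_card_gt0 (R : realType) (Y : finType) (q : {ffun Y -> R}) :
  is_pmf q -> (0 < #|Y|)%N.
Proof.
move=> [_ q_sum1]; apply/card_gt0P.
case: (pickP (@predT Y)) => [y _|none]; first by exists y.
by move: q_sum1; rewrite big_pred0 // => /eqP; rewrite eq_sym oner_eq0.
Qed.

Theorem mainTheorem4
  (R : realType) (d : measure_display) (T : measurableType d)
  (mu : {measure set T -> \bar R})
  (Adata : finType) (X : {set {set Adata}})
  (Y : finType) (nb : rel Y) (nb_sym : symmetric nb)
  (S : {set Adata} -> {ffun Y -> R}) (S_pmf : forall x, x \in X -> is_pmf (S x))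
  (B : Y -> T -> R) (B_dens : forall y, is_density mu (B y))
  (x x' : {set Adata}) (hx : x \in X) (hx' : x' \in X)
  (I J : nat) (A : 'I_I -> {set Y}) (E : 'I_J -> {set Y})
  (hA : is_partition_fam A) (hE : is_partition_fam E)
  (hApos : forall i, 0 < prob (S x) (A i))
  (hEpos : forall j, 0 < prob (S x') (E j))
  (gstar : {ffun {ffun 'I_(I + J) -> Y} -> R})
  (hgstar : is_coupling (cond_family (S x) (S x') A E) gstar)
  (hcompat : dY_compatible nb (cond_family (S x) (S x') A E) gstar)
  (k : divergence_kind) (alpha : R) (halpha : 1 < alpha) :
  forall g : {ffun {ffun 'I_(I + J) -> Y} -> R},
    is_coupling (cond_family (S x) (S x') A E) g ->
    (expected_cost mu k alpha nb B (S x) (S x') A E gstar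
       <= expected_cost mu k alpha nb B (S x) (S x') A E g)%E.
Proof.
(* Only the monotonicity of [cost_hat] in the distances matters. *)
move=> g g_coupling; rewrite /expected_cost.
have /card_gt0P[y0 _] := pmf_card_gt0 (S_pmf x hx).
have [i _] := hA.1 y0.
have IJ_gt0 : (0 < I + J)%N by rewrite addn_gt0 (leq_ltn_trans (leq0n i) (ltn_ord i)).
apply: (compatible_coupling_optimal nb_sym hgstar hcompat (o := Ordinal IJ_gt0)) => //.
move=> t t'; exact: cost_hat_mono.
Qed.
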